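(* Let $F=C^\infty(]0,1[,\mathbb{R})$ with the Fr\'echet topology given by the seminorms $\|f\|_{n,k}=\sup_{\frac{1}{n+1}\le x\le\frac{n}{n+1}}|f^{(k)}(x)|$, $(n,k)\in\mathbb{N}^*\times\mathbb{N}$. Let $\mathcal{A}=\{f\in C^\infty(]0,1[,]0,1[)\mid \lim_{x\to1}f(x)=1,\ \lim_{x\to0}f(x)=0\}$ and $\mathcal{D}=\{f\in\mathcal{A}\mid \inf_{x\in]0,1[}f'(x)>0 \text{ and } \sup_{x\in]0,1[}f'(x)>0\}$, with the topology induced by $F$. Then $\mathcal{D}$ is contractible. *)

From Stdlib Require Import Reals.
From Coquelicot Require Import Coquelicot.
Open Scope R_scope.

(* Elements of F = C^oo(]0,1[,R) are represented by functions R -> R whose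
   values outside ]0,1[ are irrelevant (all notions below only look at ]0,1[). *)
Definition smooth01 (f : R -> R) : Prop :=
  forall (k : nat) (x : R), 0 < x < 1 -> ex_derive_n f k x.

Definition seminorm (n k : nat) (f : R -> R) : Rbar :=
  Lub_Rbar (fun y => exists x, / INR (n + 1) <= x <= INR n / INR (n + 1)
                               /\ y = Rabs (Derive_n f k x)).

Definition in_A (f : R -> R) : Prop :=
  smooth01 f /\
  (forall x, 0 < x < 1 -> 0 < f x < 1) /\
  filterlim f (at_left 1) (locally 1) /\
  filterlim f (at_right 0) (locally 0).

Definition in_D (f : R -> R) : Prop :=
  in_A f /\
  Rbar_lt 0 (Glb_Rbar (fun y => exists x, 0 < x < 1 /\ y = Derive f x)) /\
  Rbar_lt 0 (Lub_Rbar (fun y => exists x, 0 < x < 1 /\ y = Derive f x)).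

(* Basic neighbourhood of f in the Frechet topology:
   { g | forall k <= K, ||g - f||_{N,k} < d } *)
Definition fnear (N K : nat) (d : R) (f g : R -> R) : Prop :=
  forall k : nat, (k <= K)%nat -> Rbar_lt (seminorm N k (fun x => g x - f x)) d.

(* Continuity of H : D x [0,1] -> D for the product of the induced
   Frechet topology on D and the usual topology on [0,1]. *)
Definition homotopy_continuous (H : (R -> R) -> R -> (R -> R)) : Prop :=
  forall (f : R -> R) (t : R), in_D f -> 0 <= t <= 1 ->
  forall (N K : nat) (eps : R), (1 <= N)%nat -> 0 < eps ->
  exists (N' K' : nat) (delta : R), (1 <= N')%nat /\ 0 < delta /\
    forall (g : R -> R) (s : R), in_D g -> 0 <= s <= 1 ->
      Rabs (s - t) < delta -> fnear N' K' delta f g ->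
      fnear N K eps (H f t) (H g s).

(* D is contractible: there is a continuous H : D x [0,1] -> D with
   H(.,0) = id and H(.,1) constant (equalities as elements of F, i.e. on ]0,1[). *)
Definition D_contractible : Prop :=
  exists (H : (R -> R) -> R -> (R -> R)) (c : R -> R),
    in_D c /\
    (forall f t, in_D f -> 0 <= t <= 1 -> in_D (H f t)) /\
    (forall f x, in_D f -> 0 < x < 1 -> H f 0 x = f x) /\
    (forall f x, in_D f -> 0 < x < 1 -> H f 1 x = c x) /\
    homotopy_continuous H.

From Stdlib Require Import Reals Lra Lia.
From Coquelicot Require Import Coquelicot.
Open Scope R_scope.

(* D is convex and contains the identity, so the straight-line homotopy
   H f t = (1 - t) f + t id contracts D onto the identity.  Its continuity
   comes from H g s - H f t = (1 - s) (g - f) + (s - t) (id - f): the first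
   term is small in every seminorm when g is close to f, and the derivatives
   of id - f are bounded on each compact segment [1/(N+1), N/(N+1)], so the
   second term is small when s is close to t. *)

Definition convex_comb (t : R) (f g : R -> R) : R -> R :=
  fun x => (1 - t) * f x + t * g x.

Lemma locally_unit_interval x : 0 < x < 1 -> locally x (fun y => 0 < y < 1).
Proof.
intros Hx; apply (locally_interval _ x (Finite 0) (Finite 1)); simpl; intros; lra.
Qed.

Lemma smooth01_locally f x n : smooth01 f -> 0 < x < 1 ->
  locally x (fun y => forall k, (k <= n)%nat -> ex_derive_n f k y).
Proof.
intros Hf Hx; apply (filter_imp (fun y => 0 < y < 1)); [|now apply locally_unit_interval].
intros y Hy k _; now apply Hf.
Qed.

Lemma smooth01_id : smooth01 (fun x => x).
Proof.
intros k x _; apply (ex_derive_n_ext (fun y => y ^ 1)); [intros; simpl; ring|].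
apply ex_derive_n_pow.
Qed.

Lemma smooth01_lincomb a b f g : smooth01 f -> smooth01 g ->
  smooth01 (fun x => a * f x + b * g x).
Proof.
intros Hf Hg k x Hx; apply ex_derive_n_plus.
- apply (filter_imp (fun y => 0 < y < 1)); [|now apply locally_unit_interval].
  intros y Hy j _; now apply ex_derive_n_scal_l, Hf.
- apply (filter_imp (fun y => 0 < y < 1)); [|now apply locally_unit_interval].
  intros y Hy j _; now apply ex_derive_n_scal_l, Hg.
Qed.

Lemma Derive_n_lincomb01 a b f g k x : smooth01 f -> smooth01 g -> 0 < x < 1 ->
  Derive_n (fun y => a * f y + b * g y) k x
  = a * Derive_n f k x + b * Derive_n g k x.
Proof.
intros Hf Hg Hx.
rewrite (Derive_n_plus (fun y => a * f y) (fun y => b * g y)), !Derive_n_scal_l;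
  [easy| |].
- apply (filter_imp (fun y => 0 < y < 1)); [|now apply locally_unit_interval].
  intros y Hy j _; now apply ex_derive_n_scal_l, Hf.
- apply (filter_imp (fun y => 0 < y < 1)); [|now apply locally_unit_interval].
  intros y Hy j _; now apply ex_derive_n_scal_l, Hg.
Qed.

Lemma Derive_convex_comb t f g x : ex_derive f x -> ex_derive g x ->
  Derive (convex_comb t f g) x = (1 - t) * Derive f x + t * Derive g x.
Proof.
intros Hf Hg; apply is_derive_unique; unfold convex_comb.
apply (is_derive_plus (fun y => (1 - t) * f y) (fun y => t * g y));
  apply is_derive_scal, Derive_correct; assumption.
Qed.

Lemma convex_comb_unit_interval t a b : 0 <= t <= 1 ->
  0 < a < 1 -> 0 < b < 1 -> 0 < (1 - t) * a + t * b < 1.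
Proof.
intros Ht Ha Hb.
assert (0 <= (1 - t) * a) by (apply Rmult_le_pos; lra).
assert (0 <= t * b) by (apply Rmult_le_pos; lra).
assert (0 <= (1 - t) * (1 - a)) by (apply Rmult_le_pos; lra).
assert (0 <= t * (1 - b)) by (apply Rmult_le_pos; lra).
split; nra.
Qed.

Lemma filterlim_convex_comb {F} {FF : Filter F} t f g (a : R) :
  filterlim f F (locally a) -> filterlim g F (locally a) ->
  filterlim (convex_comb t f g) F (locally a).
Proof.
intros Hf Hg.
assert (Ea : plus (scal (1 - t) a) (scal t a) = a).
{ unfold plus, scal; simpl; unfold mult; simpl; ring. }
rewrite <- Ea.
apply (filterlim_comp_2 (G := locally (scal (1 - t) a)) (H := locally (scal t a))
  (fun x => (1 - t) * f x) (fun x => t * g x) plus); [| |exact (filterlim_plus (V := R_NormedModule) _ _)].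
- apply (filterlim_comp _ _ _ f (scal (1 - t)) F (locally a)); [exact Hf|].
  exact (filterlim_scal_r (K := R_AbsRing) (V := R_NormedModule) _ _).
- apply (filterlim_comp _ _ _ g (scal t) F (locally a)); [exact Hg|].
  exact (filterlim_scal_r (K := R_AbsRing) (V := R_NormedModule) _ _).
Qed.

Lemma filterlim_id_within (D : R -> Prop) (a : R) :
  filterlim (fun x => x) (within D (locally a)) (locally a).
Proof.
apply (filterlim_filter_le_1 (F := locally a)); [apply filter_le_within|apply filterlim_id].
Qed.

Lemma Glb_Rbar_pos_lower_bound E : Rbar_lt 0 (Glb_Rbar E) ->
  exists c, 0 < c /\ forall y, E y -> c <= y.
Proof.
destruct (Glb_Rbar_correct E) as [Hlb _].
destruct (Glb_Rbar E) as [l| |]; simpl; intros Hpos; try contradiction.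
- exists l; split; [exact Hpos|]; intros y Hy; exact (Hlb _ Hy).
- exists 1; split; [lra|]; intros y Hy; specialize (Hlb _ Hy); contradiction.
Qed.

Lemma in_D_derive_lower_bound f : in_D f ->
  exists c, 0 < c /\ forall x, 0 < x < 1 -> c <= Derive f x.
Proof.
intros [_ [Hinf _]]; destruct (Glb_Rbar_pos_lower_bound _ Hinf) as [c [Hc Hlb]].
exists c; split; [exact Hc|]; intros x Hx; apply Hlb; now exists x.
Qed.

(* The supremum condition in D is implied by the infimum condition. *)
Lemma in_D_intro f c : in_A f -> 0 < c ->
  (forall x, 0 < x < 1 -> c <= Derive f x) -> in_D f.
Proof.
intros HA Hc Hlb; split; [exact HA|split].
- apply (Rbar_lt_le_trans _ c); [exact Hc|].
  apply (proj2 (Glb_Rbar_correct _)); intros y [x [Hx ->]]; now apply Hlb.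
- apply (Rbar_lt_le_trans _ (Derive f (1/2))).
  + simpl; specialize (Hlb (1/2)); lra.
  + apply (proj1 (Lub_Rbar_correct _)); exists (1/2); split; [lra|easy].
Qed.

Lemma in_D_convex f g t : in_D f -> in_D g -> 0 <= t <= 1 ->
  in_D (convex_comb t f g).
Proof.
intros Df Dg Ht.
destruct (in_D_derive_lower_bound f Df) as [cf [Hcf Bf]].
destruct (in_D_derive_lower_bound g Dg) as [cg [Hcg Bg]].
destruct Df as [[Sf [Vf [Lf Rf]]] _], Dg as [[Sg [Vg [Lg Rg]]] _].
apply (in_D_intro _ (Rmin cf cg)); [split; [|split; [|split]]| |].
- exact (smooth01_lincomb _ _ _ _ Sf Sg).
- intros x Hx; apply convex_comb_unit_interval; auto.
- now apply filterlim_convex_comb.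
- now apply filterlim_convex_comb.
- now apply Rmin_glb_lt.
- intros x Hx; rewrite Derive_convex_comb by (apply (Sf 1%nat) || apply (Sg 1%nat); exact Hx).
  specialize (Bf x Hx); specialize (Bg x Hx).
  pose proof (Rmin_l cf cg); pose proof (Rmin_r cf cg); nra.
Qed.

Lemma in_D_id : in_D (fun x => x).
Proof.
apply (in_D_intro _ 1); [split; [|split; [|split]]|lra|].
- exact smooth01_id.
- easy.
- apply filterlim_id_within.
- apply filterlim_id_within.
- intros x _; rewrite Derive_id; lra.
Qed.

Lemma smooth01_minus f g : smooth01 f -> smooth01 g -> smooth01 (fun x => f x - g x).
Proof.
intros Hf Hg k x Hx; apply ex_derive_n_minus; now apply smooth01_locally.
Qed.

Lemma Derive_n_convex_comb_sub s t f g c k x :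
  smooth01 f -> smooth01 g -> smooth01 c -> 0 < x < 1 ->
  Derive_n (fun y => convex_comb s g c y - convex_comb t f c y) k x
  = (1 - s) * Derive_n (fun y => g y - f y) k x
    + (s - t) * Derive_n (fun y => c y - f y) k x.
Proof.
intros Hf Hg Hc Hx.
rewrite <- Derive_n_lincomb01 by (easy || now apply smooth01_minus).
apply Derive_n_ext; intros y; unfold convex_comb; ring.
Qed.

Lemma segment_in_unit_interval N : (1 <= N)%nat ->
  0 < / INR (N + 1) /\ / INR (N + 1) <= INR N / INR (N + 1) /\ INR N / INR (N + 1) < 1.
Proof.
intros HN; rewrite plus_INR; simpl (INR 1).
assert (H1 : 1 <= INR N) by (apply (le_INR 1); lia).
assert (Hinv : 0 < / (INR N + 1)) by (apply Rinv_0_lt_compat; lra).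
replace (INR N / (INR N + 1)) with (1 - / (INR N + 1)) by (field; lra).
assert (/ (INR N + 1) <= / 2) by (apply Rinv_le_contravar; lra).
lra.
Qed.

Lemma seminorm_le_of_bound N k u c :
  (forall x, / INR (N + 1) <= x <= INR N / INR (N + 1) -> Rabs (Derive_n u k x) <= c) ->
  Rbar_le (seminorm N k u) c.
Proof.
intros Hb; apply (proj2 (Lub_Rbar_correct _)); intros y [x [Hx ->]]; now apply Hb.
Qed.

Lemma seminorm_lt_bound N k u (d : R) : Rbar_lt (seminorm N k u) d ->
  exists r, r < d /\ forall x, / INR (N + 1) <= x <= INR N / INR (N + 1) ->
    Rabs (Derive_n u k x) <= r.
Proof.
unfold seminorm; destruct (Lub_Rbar_correct
  (fun y => exists x, / INR (N + 1) <= x <= INR N / INR (N + 1)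
                      /\ y = Rabs (Derive_n u k x))) as [Hub _].
destruct Lub_Rbar as [l| |]; simpl; intros Hd; try contradiction.
- exists l; split; [exact Hd|]; intros x Hx; apply Hub; now exists x.
- exists (d - 1); split; [lra|]; intros x Hx.
  specialize (Hub _ (ex_intro _ x (conj Hx eq_refl))); contradiction.
Qed.

Lemma Derive_n_bounded_on_segment h N k : smooth01 h -> (1 <= N)%nat ->
  exists M, forall x, / INR (N + 1) <= x <= INR N / INR (N + 1) ->
    Rabs (Derive_n h k x) <= M.
Proof.
intros Hh HN; destruct (segment_in_unit_interval N HN) as [H0 [Hab H1]].
destruct (continuity_ab_maj (fun x => Rabs (Derive_n h k x)) _ _ Hab) as [xM [HM _]].
- intros x Hx; apply (continuity_pt_comp (Derive_n h k) Rabs); [|apply Rcontinuity_abs].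
  apply continuity_pt_filterlim, (ex_derive_continuous (K := R_AbsRing) (V := R_NormedModule)).
  apply (Hh (S k)); lra.
- now exists (Rabs (Derive_n h k xM)).
Qed.

Lemma Derive_n_uniformly_bounded_on_segment h N K : smooth01 h -> (1 <= N)%nat ->
  exists M, 0 <= M /\ forall k x, (k <= K)%nat ->
    / INR (N + 1) <= x <= INR N / INR (N + 1) -> Rabs (Derive_n h k x) <= M.
Proof.
intros Hh HN; induction K as [|K [M [HM0 HM]]].
- destruct (Derive_n_bounded_on_segment h N 0 Hh HN) as [M HM].
  exists (Rmax M 0); split; [apply Rmax_r|]; intros k x Hk Hx.
  replace k with 0%nat by lia; eapply Rle_trans; [now apply HM|apply Rmax_l].
- destruct (Derive_n_bounded_on_segment h N (S K) Hh HN) as [M' HM'].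
  exists (Rmax M M'); split; [eapply Rle_trans; [exact HM0|apply Rmax_l]|].
  intros k x Hk Hx; destruct (Nat.eq_dec k (S K)) as [->|Hne].
  + eapply Rle_trans; [now apply HM'|apply Rmax_r].
  + eapply Rle_trans; [apply HM; [lia|exact Hx]|apply Rmax_l].
Qed.

Lemma homotopy_continuous_convex_comb c : smooth01 c ->
  homotopy_continuous (fun f t => convex_comb t f c).
Proof.
intros Hc f t Df Ht N K eps HN Heps.
assert (Hf : smooth01 f) by apply Df.
destruct (Derive_n_uniformly_bounded_on_segment (fun x => c x - f x) N K
  (smooth01_minus _ _ Hc Hf) HN) as [M [HM0 HM]].
exists N, K, (eps / (M + 2)).
assert (Hdelta : 0 < eps / (M + 2)) by (apply Rdiv_lt_0_compat; lra).
assert (Heps_eq : eps / (M + 2) * (M + 2) = eps) by (field; lra).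
split; [exact HN|split; [exact Hdelta|]].
intros g s Dg Hs Hst Hnear k Hk.
destruct (seminorm_lt_bound N k _ _ (Hnear k Hk)) as [r [Hr Hgf]].
apply (Rbar_le_lt_trans _ (r + eps / (M + 2) * M)); [|simpl; nra].
apply seminorm_le_of_bound; intros x Hx.
destruct (segment_in_unit_interval N HN) as [H0 [_ H1]].
rewrite Derive_n_convex_comb_sub by (apply Df || apply Dg || exact Hc || lra).
eapply Rle_trans; [apply Rabs_triang|]; rewrite !Rabs_mult.
specialize (Hgf x Hx); specialize (HM k x Hk Hx).
assert (Rabs (1 - s) <= 1) by (rewrite Rabs_pos_eq; lra).
pose proof (Rabs_pos (1 - s)); pose proof (Rabs_pos (s - t));
pose proof (Rabs_pos (Derive_n (fun y => g y - f y) k x)).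
nra.
Qed.

Theorem proposition8p1 : D_contractible.
Proof.
exists (fun f t => convex_comb t f (fun x => x)), (fun x => x).
split; [exact in_D_id|split; [|split; [|split]]].
- intros f t Df Ht; exact (in_D_convex f _ t Df in_D_id Ht).
- intros f x _ _; unfold convex_comb; ring.
- intros f x _ _; unfold convex_comb; ring.
- exact (homotopy_continuous_convex_comb _ smooth01_id).
Qed.
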